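(* Let $K$ be a field, let $R$ be a $K$-algebra and let $A$ be a right double Ore extension of $R$ with generating variables $x_1,x_2$, relation $$x_2x_1=p_{12}x_1x_2+p_{11}x_1^2+\tau_1x_1+\tau_2x_2+\tau_0\qquad(p_{12},p_{11}\in K,\ \tau_0,\tau_1,\tau_2\in R),$$ and associated maps $\sigma=(\sigma_{ij})\colon R\to M_2(R)$ and $\delta=(\delta_1,\delta_2)^T\colon R\to R^{\oplus 2}$. Suppose that $p_{11}=0$, $p_{12}\neq 0$, $\sigma_{12}=\sigma_{21}=0$ (i.e. $\sigma=\left(\begin{smallmatrix}\sigma_{11}&0\\0&\sigma_{22}\end{smallmatrix}\right)$), and $\sigma_{11}(r)\neq 0$, $\sigma_{22}(r)\neq 0$ for all $r\in R\setminus\{0\}$. Then $A$ is a skew PBW extension of $R$ (in the variables $x_1,x_2$).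
   Context: All algebras are over a field $K$. A $K$-algebra $B$ containing $R$ as a subring is a right double Ore extension of $R$ if: (1) $B$ is generated by $R$ and two elements $x_1,x_2$; (2) $x_2x_1=p_{12}x_1x_2+p_{11}x_1^2+\tau_1x_1+\tau_2x_2+\tau_0$ with $p_{12},p_{11}\in K$, $\tau_0,\tau_1,\tau_2\in R$; (3) $B$ is a free left $R$-module with basis $\{x_1^{a}x_2^{b}: a,b\ge 0\}$; (4) $x_1R+x_2R\subseteq Rx_1+Rx_2+R$. By (3),(4) there are uniquely determined $K$-linear maps $\sigma_{ij},\delta_i\colon R\to R$ with $x_ir=\sigma_{i1}(r)x_1+\sigma_{i2}(r)x_2+\delta_i(r)$ for $i=1,2$, $r\in R$; one writes $\sigma=(\sigma_{ij})\colon R\to M_2(R)$, $\delta=(\delta_1,\delta_2)^T$, $P=\{p_{12},p_{11}\}$. A ring $A$ is a skew PBW extension of a ring $R$ in $x_1,\dots,x_n$ if: (i) $R\subseteq A$; (ii) $A$ is a free left $R$-module with basis the standard monomials $x_1^{\alpha_1}\cdots x_n^{\alpha_n}$, $\alpha\in\mathbb N^n$ (with $x_1^0\cdots x_n^0=1$); (iii) for each $i$ and each $r\in R\setminus\{0\}$ there is $c_{i,r}\in R\setminus\{0\}$ with $x_ir-c_{i,r}x_i\in R$; (iv) for all $i,j$ there is $c_{i,j}\in R\setminus\{0\}$ with $x_jx_i-c_{i,j}x_ix_j\in R+Rx_1+\cdots+Rx_n$. *)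

From HB Require Import structures.
From mathcomp Require Import all_boot all_order all_algebra.
Set Implicit Arguments. Unset Strict Implicit. Unset Printing Implicit Defensive.
Import GRing.Theory.
Local Open Scope ring_scope.

Section Defs.
Variables (K : fieldType) (B : algType K).

Definition is_subalgebra (R : B -> Prop) : Prop :=
  [/\ R 1,
      forall a b, R a -> R b -> R (a - b),
      forall a b, R a -> R b -> R (a * b)
    & forall (k : K) a, R a -> R (k *: a)].

Definition generated_by (R : B -> Prop) (x1 x2 : B) : Prop :=
  forall S : B -> Prop, is_subalgebra S -> (forall r, R r -> S r) ->
    S x1 -> S x2 -> forall b, S b.

Definition left_free_basis2 (R : B -> Prop) (x1 x2 : B) : Prop :=
  (forall b : B, exists (N : nat) (c : nat -> nat -> B),
      (forall i j, R (c i j)) /\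
      b = \sum_(i < N) \sum_(j < N) c i j * (x1 ^+ i * x2 ^+ j)) /\
  (forall (N : nat) (c : nat -> nat -> B),
      (forall i j, R (c i j)) ->
      \sum_(i < N) \sum_(j < N) c i j * (x1 ^+ i * x2 ^+ j) = 0 ->
      forall i j, (i < N)%N -> (j < N)%N -> c i j = 0).

Definition right_double_Ore (R : B -> Prop) (x1 x2 : B) (p12 p11 : K)
    (tau0 tau1 tau2 : B) : Prop :=
  [/\ is_subalgebra R,
      generated_by R x1 x2,
      [/\ R tau0, R tau1, R tau2 &
          x2 * x1 = p12 *: (x1 * x2) + p11 *: (x1 * x1)
                    + tau1 * x1 + tau2 * x2 + tau0],
      left_free_basis2 R x1 x2
    & forall r, R r -> forall x, (x = x1 \/ x = x2) ->
        exists a b c, [/\ R a, R b, R c & x * r = a * x1 + b * x2 + c]].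

Definition std_monomial (n : nat) (x : 'I_n -> B) (alpha : 'I_n -> nat) : B :=
  \prod_(i < n) x i ^+ alpha i.

Definition left_free_std_monomials (R : B -> Prop) (n : nat) (x : 'I_n -> B)
  : Prop :=
  (forall b : B, exists (N : nat) (c : {ffun 'I_n -> 'I_N} -> B),
      (forall a, R (c a)) /\
      b = \sum_(a : {ffun 'I_n -> 'I_N}) c a * std_monomial x (fun i => a i)) /\
  (forall (N : nat) (c : {ffun 'I_n -> 'I_N} -> B),
      (forall a, R (c a)) ->
      \sum_(a : {ffun 'I_n -> 'I_N}) c a * std_monomial x (fun i => a i) = 0 ->
      forall a, c a = 0).

Definition skew_PBW (R : B -> Prop) (n : nat) (x : 'I_n -> B) : Prop :=
  [/\ left_free_std_monomials R x,
      (forall (i : 'I_n) r, R r -> r <> 0 ->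
          exists c, [/\ R c, c <> 0 & R (x i * r - c * x i)])
    & (forall i j : 'I_n, exists c, [/\ R c, c <> 0 &
          exists (r0 : B) (r : 'I_n -> B), [/\ R r0, (forall k, R (r k)) &
            x j * x i - c * x i * x j = r0 + \sum_(k < n) r k * x k]])].

Definition vars2 (x1 x2 : B) : 'I_2 -> B :=
  fun i => if val i == 0%N then x1 else x2.

End Defs.

From HB Require Import structures.
From mathcomp Require Import all_boot all_order all_algebra.
Import GRing.Theory.
Local Open Scope ring_scope.
Set Implicit Arguments. Unset Strict Implicit.

(* Since sigma is diagonal, x_i r = sigma_ii(r) x_i + delta_i(r), which is the
   skew commutation of the variables with R, with sigma_ii(r) <> 0 for r <> 0.
   With p11 = 0 the defining relation reads x2 x1 - p12 x1 x2 in R + R x1 + R x2;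
   as p12 is a nonzero scalar it can also be solved for x1 x2.  Finally the
   standard monomials of a skew PBW extension in two variables are exactly the
   x1^a x2^b of the double Ore extension, up to re-indexing exponents. *)

Section Subalgebra.
Variables (K : fieldType) (B : algType K) (R : B -> Prop).
Hypothesis subR : is_subalgebra R.

Lemma subalg1 : R 1. Proof. by case: subR. Qed.

Lemma subalgB a b : R a -> R b -> R (a - b).
Proof. by case: subR => _ subB _ _; apply: subB. Qed.

Lemma subalg0 : R 0.
Proof. by rewrite -(subrr 1); apply: subalgB; apply: subalg1. Qed.

Lemma subalgZ k a : R a -> R (k *: a).
Proof. by case: subR => _ _ _ subZ; apply: subZ. Qed.

Lemma subalg_scalar k : R k%:A.
Proof. exact/subalgZ/subalg1. Qed.

End Subalgebra.

Section TwoExponents.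

Lemma ord2P (i : 'I_2) : i = ord0 \/ i = ord_max.
Proof. by case: i => [[|[|i]] ?]; [left | right |]; try apply: val_inj. Qed.

Definition ffun_of_pair N (p : 'I_N * 'I_N) : {ffun 'I_2 -> 'I_N} :=
  [ffun k => if k == ord0 then p.1 else p.2].

Definition pair_of_ffun N (a : {ffun 'I_2 -> 'I_N}) : 'I_N * 'I_N :=
  (a ord0, a ord_max).

Lemma ffun_of_pairK N : cancel (@ffun_of_pair N) (@pair_of_ffun N).
Proof. by case=> i j; rewrite /pair_of_ffun !ffunE. Qed.

Lemma pair_of_ffunK N : cancel (@pair_of_ffun N) (@ffun_of_pair N).
Proof.
by move=> a; apply/ffunP => k; rewrite ffunE; case: (ord2P k) => ->.
Qed.

Lemma big_ffun2 (V : nmodType) N (F : {ffun 'I_2 -> 'I_N} -> V) :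
  \sum_a F a = \sum_(i < N) \sum_(j < N) F (ffun_of_pair (i, j)).
Proof.
rewrite pair_big (reindex (@ffun_of_pair N)) //.
by exists (@pair_of_ffun N) => a _; rewrite (ffun_of_pairK, pair_of_ffunK).
Qed.

End TwoExponents.

Section TwoVariables.
Variables (K : fieldType) (B : algType K) (x1 x2 : B).

Lemma vars2_ind (P : B -> Prop) : P x1 -> P x2 -> forall i, P (vars2 x1 x2 i).
Proof. by move=> P1 P2 i; rewrite /vars2; case: ifP. Qed.

Lemma std_monomial_vars2 (alpha : 'I_2 -> nat) :
  std_monomial (vars2 x1 x2) alpha = x1 ^+ alpha ord0 * x2 ^+ alpha ord_max.
Proof.
rewrite /std_monomial !big_ord_recl big_ord0 mulr1 /=.
by congr (_ * _ ^+ alpha _); apply: val_inj.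
Qed.

Lemma sum_vars2 (r : 'I_2 -> B) :
  \sum_(k < 2) r k * vars2 x1 x2 k = r ord0 * x1 + r ord_max * x2.
Proof.
rewrite !big_ord_recl big_ord0 addr0 /=.
by congr (_ + r _ * _); apply: val_inj.
Qed.

Lemma left_free_std_monomials_vars2 (R : B -> Prop) :
  left_free_basis2 R x1 x2 -> left_free_std_monomials R (vars2 x1 x2).
Proof.
move=> [span indep]; split.
  move=> b; have [N [c [Rc ->]]] := span b.
  exists N, (fun a : {ffun 'I_2 -> 'I_N} => c (a ord0) (a ord_max)).
  split=> [a|]; first exact: Rc.
  rewrite big_ffun2; apply: eq_bigr => i _; apply: eq_bigr => j _.
  by rewrite std_monomial_vars2 !ffunE.
case=> [|N] c Rc sum_eq0 a; first by case: (a ord0).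
pose c2 i j := c (ffun_of_pair (inord i, inord j)).
have c2_eq0 : \sum_(i < N.+1) \sum_(j < N.+1) c2 i j * (x1 ^+ i * x2 ^+ j) = 0.
  rewrite -[RHS]sum_eq0 big_ffun2; apply: eq_bigr => i _; apply: eq_bigr => j _.
  by rewrite std_monomial_vars2 /c2 !ffunE /= !inord_val.
have := indep _ c2 (fun i j => Rc _) c2_eq0 _ _ (ltn_ord (a ord0)) (ltn_ord (a ord_max)).
by rewrite /c2 !inord_val -[(a ord0, a ord_max)]/(pair_of_ffun a) pair_of_ffunK.
Qed.

End TwoVariables.

Section SkewCommutation.
Variables (K : fieldType) (B : algType K) (R : B -> Prop).
Hypothesis subR : is_subalgebra R.

Definition in_deg_le1 n (x : 'I_n -> B) (y : B) : Prop :=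
  exists (r0 : B) (r : 'I_n -> B),
    [/\ R r0, (forall k, R (r k)) & y = r0 + \sum_(k < n) r k * x k].

Definition skew_commute n (x : 'I_n -> B) (i j : 'I_n) : Prop :=
  exists c, [/\ R c, c <> 0 & in_deg_le1 x (x j * x i - c * x i * x j)].

Lemma in_deg_le1_0 n (x : 'I_n -> B) : in_deg_le1 x 0.
Proof.
exists 0, (fun=> 0); split=> [|k|]; try exact: subalg0.
by rewrite big1 ?addr0 // => k _; rewrite mul0r.
Qed.

Lemma in_deg_le1Z n (x : 'I_n -> B) k y : in_deg_le1 x y -> in_deg_le1 x (k *: y).
Proof.
move=> [r0 [r [Rr0 Rr ->]]]; exists (k *: r0), (fun i => k *: r i).
split=> [||]; [exact: subalgZ | by move=> i; exact: subalgZ |].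
by rewrite scalerDr scaler_sumr; congr (_ + _); apply: eq_bigr => i _; rewrite scalerAl.
Qed.

Lemma in_deg_le1_vars2 (x1 x2 r0 r1 r2 : B) :
  R r0 -> R r1 -> R r2 -> in_deg_le1 (vars2 x1 x2) (r0 + r1 * x1 + r2 * x2).
Proof.
move=> Rr0 Rr1 Rr2; exists r0, (vars2 r1 r2); split=> //; first exact: vars2_ind.
by rewrite sum_vars2 addrA.
Qed.

Lemma skew_commute_refl n (x : 'I_n -> B) i : skew_commute x i i.
Proof.
exists 1; split; [exact: subalg1 | exact/eqP/oner_neq0 |].
by rewrite mul1r subrr; apply: in_deg_le1_0.
Qed.

(* Dividing by the invertible scalar [k] reverses the relation. *)
Lemma skew_commute_scalar n (x : 'I_n -> B) i j (k : K) : k != 0 ->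
  in_deg_le1 x (x j * x i - k *: (x i * x j)) ->
  skew_commute x i j /\ skew_commute x j i.
Proof.
move=> k_neq0 rel_ij.
have scalar_neq0 (l : K) : l != 0 -> l%:A <> 0 :> B.
  by move=> l_neq0 /eqP; rewrite scaler_eq0 (negbTE l_neq0) oner_eq0.
have mul_scalar (l : K) (y z : B) : l%:A * y * z = l *: (y * z).
  by rewrite mulr_algl scalerAl.
split; [exists k%:A | exists k^-1%:A]; split; try exact: subalg_scalar.
- exact: scalar_neq0.
- by rewrite mul_scalar.
- by apply: scalar_neq0; rewrite invr_eq0.
rewrite mul_scalar.
have -> : x i * x j - k^-1 *: (x j * x i) =
          - k^-1 *: (x j * x i - k *: (x i * x j)).
  by rewrite scalerBr scalerA mulNr mulVf // scaleN1r scaleNr opprK addrC.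
exact: in_deg_le1Z.
Qed.

Lemma skew_commute_ord2 (x : 'I_2 -> B) (k : K) : k != 0 ->
  in_deg_le1 x (x ord_max * x ord0 - k *: (x ord0 * x ord_max)) ->
  forall i j, skew_commute x i j.
Proof.
move=> k_neq0 /(skew_commute_scalar k_neq0) [rel01 rel10].
move=> i j; case: (ord2P i) => ->; case: (ord2P j) => -> //;
  exact: skew_commute_refl.
Qed.

End SkewCommutation.

Theorem theorem3p1 (K : fieldType) (B : algType K) (R : B -> Prop)
    (x1 x2 : B) (p12 p11 : K) (tau0 tau1 tau2 : B)
    (s11 s12 s21 s22 d1 d2 : B -> B) :
  right_double_Ore R x1 x2 p12 p11 tau0 tau1 tau2 ->
  (* sigma, delta: the maps determined by x_i r = s_i1(r) x1 + s_i2(r) x2 + d_i(r) *)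
  (forall r, R r -> (R (s11 r) /\ R (s12 r) /\ R (s21 r) /\ R (s22 r) /\
                        R (d1 r) /\ R (d2 r))) ->
  (forall r, R r -> x1 * r = s11 r * x1 + s12 r * x2 + d1 r /\
                    x2 * r = s21 r * x1 + s22 r * x2 + d2 r) ->
  p11 = 0 -> p12 != 0 ->
  (forall r, R r -> s12 r = 0 /\ s21 r = 0) ->
  (forall r, R r -> r <> 0 -> s11 r <> 0 /\ s22 r <> 0) ->
  skew_PBW R (vars2 x1 x2).
Proof.
move=> [subR _ [Rtau0 Rtau1 Rtau2 rel21] free _] Rsd xr p11_0 p12_neq0 sigma_diag
  sigma_neq0.
split.
- exact: left_free_std_monomials_vars2.
- move=> i r Rr r_neq0.
  have [Rs11 [_ [_ [Rs22 [Rd1 Rd2]]]]] := Rsd r Rr.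
  have [s11_neq0 s22_neq0] := sigma_neq0 r Rr r_neq0.
  have [x1r x2r] := xr r Rr; have [s12_0 s21_0] := sigma_diag r Rr.
  apply: (@vars2_ind _ _ _ _ (fun x => exists c, [/\ R c, c <> 0 & R (x * r - c * x)])).
  + by exists (s11 r); rewrite x1r s12_0 mul0r addr0 addrAC subrr add0r.
  + by exists (s22 r); rewrite x2r s21_0 mul0r add0r addrAC subrr add0r.
- apply: (skew_commute_ord2 subR p12_neq0).
  rewrite -[vars2 x1 x2 ord0]/x1 -[vars2 x1 x2 ord_max]/x2 rel21 p11_0 scale0r addr0.
  rewrite !(addrAC _ _ (- _)) subrr add0r addrC addrA.
  exact: in_deg_le1_vars2.
Qed.
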